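(* Let $X$ be a path-connected topological space admitting a universal cover, let $\mathfrak a\in H^1(X;\mathbb R)$ be represented by a singular one-cocycle $\alpha$, and let $G\subseteq\mathrm{Homeo}(X,\mathfrak a)$ be a subgroup on which the cocycles $\mathfrak G_{x,\alpha}$ and $\mathfrak G_{y,\alpha}$ are bounded, for some $x,y\in X$. Then the map $\mathfrak q\colon G\to\mathbb R$ defined by $$\mathfrak q(g):=\mathfrak K_\alpha(g)(y)-\mathfrak K_\alpha(g)(x)$$ is a quasimorphism on $G$, and $D(\mathfrak q)\le\|\mathfrak G_{x,\alpha}-\mathfrak G_{y,\alpha}\|\le\|\mathfrak G_{x,\alpha}\|+\|\mathfrak G_{y,\alpha}\|$, where $\|\cdot\|$ is the supremum norm on $G\times G$.
   Context: $\mathrm{Homeo}(X,\mathfrak a)$ is the group of homeomorphisms $g$ with $g^*\mathfrak a=\mathfrak a$. $\mathfrak G_{z,\alpha}(g,h)=\int_\gamma g^*\alpha-\alpha$ for $\gamma$ any path from $z$ to $hz$, where $\int_\gamma\sigma$ is the pairing of chain and cochain. For $g\in\mathrm{Homeo}(X,\mathfrak a)$, $\mathfrak K_\alpha(g)$ is a function $F\colon X\to\mathbb R$, defined up to additive constant, with $g^*\alpha-\alpha=\delta F$; so differences $\mathfrak K_\alpha(g)(y)-\mathfrak K_\alpha(g)(x)$ are well defined. The defect of $\mathfrak q\colon G\to\mathbb R$ is $D(\mathfrak q)=\sup_{g,h\in G}|\mathfrak q(g)-\mathfrak q(gh)+\mathfrak q(h)|$, and $\mathfrak q$ is a quasimorphism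 if $D(\mathfrak q)<\infty$. *)

From HB Require Import structures.
From mathcomp Require Import all_boot all_order all_algebra.
From mathcomp Require Import all_classical all_reals all_analysis.
From Stdlib Require Import ClassicalEpsilon.
Set Implicit Arguments. Unset Strict Implicit. Unset Printing Implicit Defensive.
Import Order.TTheory GRing.Theory Num.Theory.
Import numFieldNormedType.Exports.
Local Open Scope classical_set_scope.
Local Open Scope ring_scope.

(* A singular 1-simplex (path) in X is represented by a map gamma : R -> X which
   is continuous and constant outside [0,1] (gamma t = gamma (clamp t)); such maps
   correspond bijectively to continuous maps [0,1] -> X. *)
Definition clamp01 {R : realType} (t : R) : R := Num.min 1 (Num.max 0 t).

Definition is_path (R : realType) (X : topologicalType) (gamma : R -> X) : Prop :=
  continuous gamma /\ forall t, gamma t = gamma (clamp01 t).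

(* standard 2-simplex with vertices e0=(0,0), e1=(1,0), e2=(0,1) *)
Definition std2simplex (R : realType) : set (R * R) :=
  [set p | 0 <= p.1 /\ 0 <= p.2 /\ p.1 + p.2 <= 1].

(* faces d_i (omitting vertex e_i) of a singular 2-simplex, as paths *)
Definition face0 (R : realType) (X : Type) (s : R * R -> X) : R -> X :=
  fun t => s (1 - clamp01 t, clamp01 t).
Definition face1 (R : realType) (X : Type) (s : R * R -> X) : R -> X :=
  fun t => s (0, clamp01 t).
Definition face2 (R : realType) (X : Type) (s : R * R -> X) : R -> X :=
  fun t => s (clamp01 t, 0).

(* A real singular 1-cochain: a real-valued function on singular 1-simplices
   (only its values on paths matter). *)
Definition is_cocycle1 (R : realType) (X : topologicalType) (alpha : (R -> X) -> R) : Prop :=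
  forall s : R * R -> X, {within (@std2simplex R), continuous s} ->
    alpha (face0 s) - alpha (face1 s) + alpha (face2 s) = 0.

Definition coboundary0 (R : realType) (X : Type) (F : X -> R) (gamma : R -> X) : R :=
  F (gamma 1) - F (gamma 0).

Definition pullback1 (R : realType) (X : Type) (g : X -> X) (alpha : (R -> X) -> R) :
  (R -> X) -> R := fun gamma => alpha (g \o gamma).

(* g^* a = a for the class a = [alpha]: g^* alpha - alpha is a coboundary *)
Definition preserves_class (R : realType) (X : topologicalType)
  (alpha : (R -> X) -> R) (g : X -> X) : Prop :=
  exists F : X -> R, forall gamma, is_path gamma ->
    pullback1 g alpha gamma - alpha gamma = coboundary0 F gamma.

Definition is_homeo (X : topologicalType) (g : X -> X) : Prop :=
  continuous g /\ exists g' : X -> X, continuous g' /\ cancel g g' /\ cancel g' g.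

Definition Homeo_class (R : realType) (X : topologicalType) (alpha : (R -> X) -> R)
  : set (X -> X) := [set g | is_homeo g /\ preserves_class alpha g].

(* subgroup of the group of self-maps under composition (gh = g \o h) *)
Definition is_subgroup (X : Type) (G : set (X -> X)) : Prop :=
  G id /\ (forall g h, G g -> G h -> G (g \o h)) /\
  (forall g, G g -> exists g', G g' /\ cancel g g' /\ cancel g' g).

Definition path_connected (R : realType) (X : topologicalType) : Prop :=
  forall a b : X, exists gamma : R -> X, is_path gamma /\ gamma 0 = a /\ gamma 1 = b.

Definition unit_square (R : realType) : set (R * R) :=
  [set p | 0 <= p.1 <= 1 /\ 0 <= p.2 <= 1].

Definition simply_connected (R : realType) (Y : topologicalType) : Prop :=
  path_connected R Y /\
  forall gamma : R -> Y, is_path gamma -> gamma 0 = gamma 1 ->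
    exists H : R * R -> Y, {within (@unit_square R), continuous H} /\
      (forall s, 0 <= s <= 1 -> H (s, 0) = gamma s /\ H (s, 1) = gamma 0) /\
      (forall t, 0 <= t <= 1 -> H (0, t) = gamma 0 /\ H (1, t) = gamma 0).

Definition covering_map (Y X : topologicalType) (p : Y -> X) : Prop :=
  continuous p /\ (forall x, exists y, p y = x) /\
  forall x : X, exists U : set X, open U /\ U x /\
    exists V : set (set Y),
      p @^-1` U = \bigcup_(W in V) W /\
      (forall W, V W -> open W) /\
      (forall W1 W2, V W1 -> V W2 -> W1 `&` W2 !=set0 -> W1 = W2) /\
      (forall W, V W -> exists s : X -> Y, {within U, continuous s} /\
          (forall u, U u -> W (s u) /\ p (s u) = u) /\
          (forall w, W w -> s (p w) = w) /\ p @` W = U).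

Definition has_universal_cover (R : realType) (X : topologicalType) : Prop :=
  exists (Y : topologicalType) (p : Y -> X), covering_map p /\ simply_connected R Y.

(* K_alpha(g): a function F with g^* alpha - alpha = delta F (chosen; defined
   up to an additive constant) *)
Definition Kfun (R : realType) (X : topologicalType) (alpha : (R -> X) -> R)
  (g : X -> X) : X -> R :=
  epsilon (inhabits (fun _ : X => (0 : R)))
    (fun F : X -> R => forall gamma, is_path gamma ->
       pullback1 g alpha gamma - alpha gamma = coboundary0 F gamma).

(* G_{z,alpha}(g,h) = int_gamma (g^* alpha - alpha), gamma a (chosen) path z -> h z *)
Definition Gcoc (R : realType) (X : topologicalType) (alpha : (R -> X) -> R)
  (z : X) (g h : X -> X) : R :=
  let gamma := epsilon (inhabits (fun _ : R => z))
      (fun gamma : R -> X => is_path gamma /\ gamma 0 = z /\ gamma 1 = h z) in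
  pullback1 g alpha gamma - alpha gamma.

Definition bounded_on (R : realType) (X : Type) (G : set (X -> X))
  (f : (X -> X) -> (X -> X) -> R) : Prop :=
  exists M : R, forall g h, G g -> G h -> `|f g h| <= M.

Definition supnorm (R : realType) (X : Type) (G : set (X -> X))
  (f : (X -> X) -> (X -> X) -> R) : R :=
  sup [set r | exists g h, G g /\ G h /\ r = `|f g h|].

Definition defect (R : realType) (X : Type) (G : set (X -> X)) (q : (X -> X) -> R) : R :=
  sup [set r | exists g h, G g /\ G h /\ r = `|q g - q (g \o h) + q h|].

Definition is_quasimorphism (R : realType) (X : Type) (G : set (X -> X))
  (q : (X -> X) -> R) : Prop :=
  exists C : R, forall g h, G g -> G h -> `|q g - q (g \o h) + q h| <= C.

From HB Require Import structures.
From mathcomp Require Import all_boot all_order all_algebra.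
From mathcomp Require Import all_classical all_reals all_analysis.
From Stdlib Require Import ClassicalEpsilon.
From mathcomp Require Import ring.
Import Order.TTheory GRing.Theory Num.Theory.
Import numFieldNormedType.Exports.
Local Open Scope classical_set_scope.
Local Open Scope ring_scope.

(* Pulling back along a composite, [(g h)^* alpha - alpha] splits as
   [h^* (g^* alpha - alpha) + (h^* alpha - alpha)], so evaluating on a path from
   [x] to [y] gives [K(gh)(y) - K(gh)(x) = K(g)(hy) - K(g)(hx) + K(h)(y) - K(h)(x)].
   Hence [q g - q (gh) + q h = (K(g)(hx) - K(g)(x)) - (K(g)(hy) - K(g)(y))], which
   is exactly [G_x(g,h) - G_y(g,h)]; the two estimates are then statements about
   suprema. *)

Section SupNorm.

Context {R : realType} {X : Type} {G : set (X -> X)}.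

Lemma supnorm_ub {f : (X -> X) -> (X -> X) -> R} {g h} :
  bounded_on G f -> G g -> G h -> `|f g h| <= supnorm G f.
Proof.
move=> [M bM] Gg Gh; apply: ub_le_sup; last by exists g, h.
by exists M => r [a [b [Ga [Gb ->]]]]; exact: bM.
Qed.

Lemma supnormB_le {f1 f2 : (X -> X) -> (X -> X) -> R} :
  G id -> bounded_on G f1 -> bounded_on G f2 ->
  supnorm G (fun g h => f1 g h - f2 g h) <= supnorm G f1 + supnorm G f2.
Proof.
move=> Gid b1 b2; apply: ge_sup; first by exists `|f1 id id - f2 id id|, id, id.
move=> r [g [h [Gg [Gh ->]]]].
by apply: (le_trans (ler_normB _ _)); apply: lerD; exact: supnorm_ub.
Qed.

Lemma defect_eq_supnorm {q : (X -> X) -> R} {f : (X -> X) -> (X -> X) -> R} :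
  (forall g h, G g -> G h -> q g - q (g \o h) + q h = f g h) ->
  defect G q = supnorm G f.
Proof.
move=> qf; rewrite /defect /supnorm; congr sup.
by apply/seteqP; split => r [g [h [Gg [Gh ->]]]]; exists g, h; rewrite qf.
Qed.

End SupNorm.

Section PrimitiveK.

Context {R : realType} {X : topologicalType} {alpha : (R -> X) -> R}.

Lemma Kfun_coboundary {g gamma} : preserves_class alpha g -> is_path gamma ->
  pullback1 g alpha gamma - alpha gamma = coboundary0 (Kfun alpha g) gamma.
Proof. by move=> pg; apply: (epsilon_spec _ _ pg). Qed.

Lemma is_path_comp {h : X -> X} {gamma : R -> X} :
  continuous h -> is_path gamma -> is_path (h \o gamma).
Proof.
move=> ch [cg eg]; split; last by move=> t /=; rewrite -eg.
by move=> t; apply: continuous_comp; [exact: cg | exact: ch].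
Qed.

Lemma Gcoc_Kfun {z g h} : path_connected R X -> preserves_class alpha g ->
  Gcoc alpha z g h = Kfun alpha g (h z) - Kfun alpha g z.
Proof.
move=> pc pg; rewrite /Gcoc.
case: (epsilon_spec (inhabits (fun _ : R => z))
  (fun gamma : R -> X => is_path gamma /\ gamma 0 = z /\ gamma 1 = h z) (pc z (h z))).
by move=> Pg [g0 g1]; rewrite Kfun_coboundary // /coboundary0 g0 g1.
Qed.

Lemma Kfun_comp_diff {g h} x y :
  path_connected R X -> continuous h -> preserves_class alpha g ->
  preserves_class alpha h -> preserves_class alpha (g \o h) ->
  Kfun alpha (g \o h) y - Kfun alpha (g \o h) x =
  (Kfun alpha g (h y) - Kfun alpha g (h x)) + (Kfun alpha h y - Kfun alpha h x).
Proof.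
move=> pc ch pg ph pgh; have [gam [Pg [g0 g1]]] := pc x y.
have := Kfun_coboundary pgh Pg.
have := Kfun_coboundary pg (is_path_comp ch Pg).
have := Kfun_coboundary ph Pg.
rewrite /coboundary0 /pullback1 /= g0 g1 => <- <- <-.
by rewrite addrA subrK.
Qed.

End PrimitiveK.

(* The universal cover and the cocycle condition serve, in the paper, to make
   [K_alpha] exist; here its existence is part of [g \in Homeo(X, a)]. *)
Theorem proposition3p1 (R : realType) (X : topologicalType)
  (alpha : (R -> X) -> R) (G : set (X -> X)) (x y : X) :
  path_connected R X -> has_universal_cover R X -> is_cocycle1 alpha ->
  G `<=` Homeo_class alpha -> is_subgroup G ->
  bounded_on G (Gcoc alpha x) -> bounded_on G (Gcoc alpha y) ->
  let q := fun g : X -> X => Kfun alpha g y - Kfun alpha g x in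
  is_quasimorphism G q /\
  defect G q <= supnorm G (fun g h => Gcoc alpha x g h - Gcoc alpha y g h) /\
  supnorm G (fun g h => Gcoc alpha x g h - Gcoc alpha y g h)
    <= supnorm G (Gcoc alpha x) + supnorm G (Gcoc alpha y).
Proof.
move=> pc _ _ GH [Gid [Gcomp _]] bx byy q.
have defect_term g h : G g -> G h ->
    q g - q (g \o h) + q h = Gcoc alpha x g h - Gcoc alpha y g h.
  move=> Gg Gh; have [[ch _] ph] := GH h Gh; have [_ pg] := GH g Gg.
  have [_ pgh] := GH _ (Gcomp g h Gg Gh).
  rewrite /q (Kfun_comp_diff x y pc ch pg ph pgh) !(Gcoc_Kfun pc pg).
  move: (Kfun alpha g) (Kfun alpha h) => a b; ring.
have bxy : bounded_on G (fun g h => Gcoc alpha x g h - Gcoc alpha y g h).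
  have [Mx bMx] := bx; have [My bMy] := byy.
  exists (Mx + My) => g h Gg Gh.
  by apply: (le_trans (ler_normB _ _)); apply: lerD; [exact: bMx | exact: bMy].
split; last split.
- have [M bM] := bxy; exists M => g h Gg Gh; rewrite defect_term //; exact: bM.
- by rewrite (defect_eq_supnorm defect_term).
- exact: (supnormB_le Gid bx byy).
Qed.
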